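(* Let $d>r\ge1$, $w=(w_1,\dots,w_r)$ a generalized partition of length $r$, and $u$ a partition with $u_1\le d-r$ and length at most $r$, such that $\mathcal D(\chi(u))\subset\mathcal D(w)$ (so $w/\chi(u)$ is a skew partition) and $(w,\tilde u)$ is admissible. Let $\Sigma=\mathcal D(w/\chi(u))$ and $$\Sigma_\pm=\{(i,j)\in\Sigma:\ \tilde u_{1-j}-(r+1-j)\gtrless w_i-i\},$$ with the convention $\tilde u_k=+\infty$ for $k\le0$ (so $\Sigma=\Sigma_+\cup\Sigma_-$). Define $s_+,s_-$ by $(s_+)_i=w_i+\operatorname{card}\{j\in\{1,..,d-r\}: w_i-i<\tilde u_j-(r+j)\}$ and $(s_-)_j=\tilde u_j-\operatorname{card}\{i\in\{1,..,r\}: w_i-i<\tilde u_j-(r+j)\}$. Then (i) $s_+=[\Sigma_+]$; (ii) $s_-=\langle\chi^*(\Sigma_-)\rangle$; (iii) $i(w,\tilde u)=|u|-\operatorname{card}(\Sigma_-)$.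
   Context: A generalized partition of length $r$ is a weakly decreasing sequence of $r$ integers, with diagram $\mathcal D(u)=\{(i,j)\in\{1,..,r\}\times\mathbb Z: j\le u_i\}$; $\mathcal D(w/u)=\mathcal D(w)\setminus\mathcal D(u)$. For a partition $u=(u_1,\dots,u_r)$ (padded with zeros to length $r$), $\chi(u)=(-u_r,\dots,-u_1)$, and $\chi^*(i,j)=(r+1-i,1-j)$. $\tilde u$ is the transpose of $u$, regarded as $(\tilde u_1,\dots,\tilde u_{d-r})$. For a finite set $S$ of pairs, $[S]_i=\operatorname{card}\{j:(i,j)\in S\}$ and $\langle S\rangle_j=\operatorname{card}\{i:(i,j)\in S\}$. For $a=(w,\tilde u)\in\mathbb Z^d$ and $I(d)=(1,\dots,d)$: $a$ is admissible iff the entries of $a-I(d)$ are pairwise distinct, and $i(a)=\operatorname{card}\{(i,j):i<j,\ (a-I(d))_i<(a-I(d))_j\}$; $i(w,\tilde u)=i(a)$. $|u|=\sum u_i$. *)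

(* Indices are 1-based: w, u are functions on nat,
   only their values at 1..r matter. *)
From mathcomp Require Import all_boot all_order all_algebra.
Set Implicit Arguments. Unset Strict Implicit. Unset Printing Implicit Defensive.
Import Order.TTheory GRing.Theory Num.Theory.
Local Open Scope ring_scope.

Definition gen_partition (r : nat) (w : nat -> int) : Prop :=
  forall i : nat, (1 <= i)%N -> (i < r)%N -> w i.+1 <= w i.

(* partition of length at most r, given by its parts u_1 >= ... >= u_r >= 0
   (padded with zeros) *)
Definition partition_r (r : nat) (u : nat -> nat) : Prop :=
  forall i : nat, (1 <= i)%N -> (i < r)%N -> (u i.+1 <= u i)%N.

Definition chi (r : nat) (u : nat -> nat) (i : nat) : int := - (u (r.+1 - i)%N)%:Z.

(* transpose: utilde_j = card {i in 1..r : u_i >= j} *)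
Definition utilde (r : nat) (u : nat -> nat) (j : nat) : nat :=
  count (fun i => (j <= u i)%N) (iota 1 r).

Definition diagram_sub (r : nat) (v w : nat -> int) : Prop :=
  forall i : nat, (1 <= i)%N -> (i <= r)%N -> v i <= w i.

Definition int_range (a b : int) : seq int :=
  [seq a + 1 + (t%:Z) | t <- iota 0 `|b - a|%N ].

Definition Sigma (r : nat) (w : nat -> int) (u : nat -> nat) : seq (int * int) :=
  [seq ((i%:Z), j) | i <- iota 1 r,
                     j <- (if chi r u i <= w i then int_range (chi r u i) (w i) else [::])].

(* Sigma_+ : utilde_{1-j} - (r+1-j) > w_i - i, with utilde_k = +oo for k <= 0 *)
Definition in_Sigma_plus (r : nat) (w : nat -> int) (u : nat -> nat) (p : int * int) : bool :=
  let: (i, j) := p in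
  if 1 - j <= 0 then true
  else (utilde r u `|1 - j|%N)%:Z - ((r%:Z) + 1 - j) > w `|i|%N - i.

Definition in_Sigma_minus (r : nat) (w : nat -> int) (u : nat -> nat) (p : int * int) : bool :=
  let: (i, j) := p in
  if 1 - j <= 0 then false
  else (utilde r u `|1 - j|%N)%:Z - ((r%:Z) + 1 - j) < w `|i|%N - i.

Definition Sigma_plus r w u := [seq p <- Sigma r w u | in_Sigma_plus r w u p].
Definition Sigma_minus r w u := [seq p <- Sigma r w u | in_Sigma_minus r w u p].

Definition card_set (S : seq (int * int)) : nat := size (undup S).

Definition row_card (S : seq (int * int)) (i : int) : nat :=
  size (undup [seq p.2 | p <- S & p.1 == i]).
Definition col_card (S : seq (int * int)) (j : int) : nat :=
  size (undup [seq p.1 | p <- S & p.2 == j]).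

Definition chi_star (r : nat) (p : int * int) : int * int :=
  ((r%:Z) + 1 - p.1, 1 - p.2).

Definition wu_vec (r : nat) (w : nat -> int) (u : nat -> nat) (k : nat) : int :=
  if (k <= r)%N then w k else (utilde r u (k - r))%:Z.

Definition a_shift (a : nat -> int) (k : nat) : int := a k - k%:Z.

Definition admissible (d : nat) (a : nat -> int) : bool :=
  uniq [seq a_shift a k | k <- iota 1 d].

Definition inv_index (d : nat) (a : nat -> int) : nat :=
  size [seq p <- [seq (i, j) | i <- iota 1 d, j <- iota 1 d]
          | (p.1 < p.2)%N && (a_shift a p.1 < a_shift a p.2)].

Definition s_plus (d r : nat) (w : nat -> int) (u : nat -> nat) (i : nat) : int :=
  w i + (count (fun j => w i - i%:Z < (utilde r u j)%:Z - (r + j)%N%:Z) (iota 1 (d - r)))%:Z.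

Definition s_minus (d r : nat) (w : nat -> int) (u : nat -> nat) (j : nat) : int :=
  (utilde r u j)%:Z - (count (fun i => w i - i%:Z < (utilde r u j)%:Z - (r + j)%N%:Z) (iota 1 r))%:Z.

Definition part_size (r : nat) (u : nat -> nat) : nat := \sum_(1 <= i < r.+1) u i.

From mathcomp Require Import all_boot all_order all_algebra.
From mathcomp Require Import zify.
Import Order.TTheory GRing.Theory Num.Theory.
Set Implicit Arguments. Unset Strict Implicit. Unset Printing Implicit Defensive.
Local Open Scope ring_scope.

(* Put x_i = w_i - i and y_k = ũ_k - (r + k) ([a_shift w] and [ut_shift]):
   these are the two blocks of (w, ũ) - I(d), and both strictly decrease.
   Hence the inversions of (w, ũ) are the pairs with x_i < y_k, and for fixed
   i these k form an initial segment {1, ..., m_i} of {1, ..., d - r}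
   ([n_above]).  Row i of Σ is the interval (-c_i, w_i] with c_i = u_(r+1-i),
   and -w_i <= m_i <= c_i.  A cell (i, j) with j <= 0 lies in Σ_+ iff
   x_i < y_(1-j), i.e. iff j > -m_i, and admissibility (x_i <> y_k) puts every
   other such cell in Σ_-.  So row i of Σ_+ has w_i + m_i cells and row i of
   Σ_- has c_i - m_i, which gives (i) and, summing over i, (iii).  Read by
   columns, the cells (i, 1-k) of Σ_- lie in the ũ_k rows with k <= c_i, minus
   those with x_i < y_k, which gives (ii). *)

Lemma count_geq_iota (a m n : nat) :
  count (leq a) (iota m n) = (m + n - maxn a m)%N.
Proof. by elim: n m => [|n IHn] m /=; rewrite ?IHn; case: leqP; lia. Qed.

Lemma nonincn_interval {disp} {T : porderType disp} {f : nat -> T} {a b i j : nat} :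
  (forall k, (a <= k < b)%N -> (f k.+1 <= f k)%O) ->
  (a <= i <= j)%N -> (j <= b)%N -> (f j <= f i)%O.
Proof.
move=> f_step ij_in j_le_b; pose I := [pred k | a <= k <= b]%N.
have I_convex : {in I &, forall i j k, (i < k < j)%N -> k \in I}.
  by move=> i' j'; rewrite !inE => ? ? k ?; rewrite inE; lia.
apply: (Order.NatMonotonyTheory.nonincn_inP I_convex); rewrite ?inE; try lia.
by move=> k; rewrite !inE => ? ?; apply: f_step; lia.
Qed.

Lemma downclosed_count_iota (P : pred nat) (n : nat) :
  (forall l, (0 < l < n)%N -> P l.+1 -> P l) ->
  forall l, (0 < l <= n)%N -> P l = (l <= count P (iota 1 n))%N.
Proof.
move=> Pdown l /andP[l_gt0 l_le_n].
have Pdown_le j : (j <= n)%N -> P j -> forall i, (0 < i <= j)%N -> P i.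
  move=> j_le_n Pj i i_in; have P_step k : (0 < k < n)%N -> (P k.+1 <= P k)%O.
    by move=> k_in; rewrite leEbool; case Pk1: (P k.+1) => //; rewrite (Pdown k).
  by have := nonincn_interval P_step i_in j_le_n; rewrite leEbool Pj; case: (P i).
have -> : iota 1 n = iota 1 l.-1 ++ l :: iota l.+1 (n - l).
  have {1}-> : n = (l.-1 + (n - l).+1)%N by lia.
  by rewrite iotaD add1n /= prednK.
rewrite count_cat /=; case Pl: (P l).
  have /eqP -> : count P (iota 1 l.-1) == size (iota 1 l.-1).
    by rewrite -all_count; apply/allP => i; rewrite mem_iota => ?; apply: (Pdown_le l) => //; lia.
  rewrite size_iota; lia.
have -> : count P (iota l.+1 (n - l)) = 0%N.
  apply/eqP; rewrite -leqn0 leqNgt -has_count; apply/hasP => -[i]; rewrite mem_iota => ? Pi.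
  by move: Pl; rewrite (Pdown_le i) //; lia.
have := count_size P (iota 1 l.-1); rewrite size_iota; lia.
Qed.

Lemma mem_int_range (a b x : int) : a <= b -> (x \in int_range a b) = (a < x <= b).
Proof.
move=> le_ab; apply/mapP/idP => [[t] | x_in]; first by rewrite mem_iota => ? ->; lia.
by exists (absz (x - a - 1)%R); rewrite ?mem_iota; lia.
Qed.

Lemma int_range_uniq (a b : int) : uniq (int_range a b).
Proof. by rewrite map_inj_uniq ?iota_uniq // => s t /=; lia. Qed.

Lemma count_int_range_gt (a b c : int) : a <= b <= c ->
  count (fun x => b < x) (int_range a c) = `|c - b|%N.
Proof.
move=> /andP[le_ab le_bc]; rewrite count_map.
rewrite (eq_count (a2 := leq (absz (b - a)%R))) ?count_geq_iota => [|t /=]; lia.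
Qed.

Lemma count_int_range_le (a b c : int) : a <= b <= c ->
  count (fun x => x <= b) (int_range a c) = `|b - a|%N.
Proof.
move=> abc; have := count_predC (fun x => b < x) (int_range a c).
rewrite count_int_range_gt // size_map size_iota (eq_count (a2 := fun x => x <= b)) => [|x].
  lia.
by rewrite /= -leNgt.
Qed.

Lemma size_undup_mem (T : eqType) (s t : seq T) : uniq t -> s =i t -> size (undup s) = size t.
Proof.
by move=> t_uniq eq_st; apply/perm_size/uniq_perm => // [|x]; rewrite ?undup_uniq ?mem_undup.
Qed.

Definition ut_shift (r : nat) (u : nat -> nat) (k : nat) : int :=
  (utilde r u k)%:Z - (r + k)%N%:Z.

Definition n_above (r D : nat) (w : nat -> int) (u : nat -> nat) (i : nat) : nat :=
  count (fun k => a_shift w i < ut_shift r u k) (iota 1 D).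

Definition Sigma_row (r : nat) (w : nat -> int) (u : nat -> nat) (i : nat) : seq int :=
  if chi r u i <= w i then int_range (chi r u i) (w i) else [::].

Lemma mem_Sigma r w u (p : int * int) :
  (p \in Sigma r w u) = (0 < p.1 <= r%:Z) && (p.2 \in Sigma_row r w u `|p.1|%N).
Proof.
apply/allpairsPdep/andP => [[i [j [i_in j_in ->]]] | [p1_in p2_in]].
  by move: i_in; rewrite mem_iota /= => i_in; split; [lia | ].
exists `|p.1|%N, p.2; split=> //; first by rewrite mem_iota; lia.
by case: p p1_in {p2_in} => a b /= ?; rewrite gez0_abs //; lia.
Qed.

Lemma count_Sigma r w u (P : pred (int * int)) :
  count P (Sigma r w u) = (\sum_(1 <= i < r.+1) count (fun j => P (i%:Z, j)) (Sigma_row r w u i))%N.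
Proof.
rewrite count_flatten sumnE !big_map /index_iota subn1.
by apply: eq_bigr => i _; rewrite count_map.
Qed.

Lemma Sigma_row_uniq r w u i : uniq (Sigma_row r w u i).
Proof. by rewrite /Sigma_row; case: ifP => // _; apply: int_range_uniq. Qed.

Lemma Sigma_uniq r w u : uniq (Sigma r w u).
Proof.
apply: allpairs_uniq_dep => [|i _|[i j] [i' j'] _ _ /= [-> ->] //]; first exact: iota_uniq.
exact: Sigma_row_uniq.
Qed.

Lemma row_card_Sigma_filter r w u (P : pred (int * int)) i : (0 < i <= r)%N ->
  row_card [seq p <- Sigma r w u | P p] i%:Z = count (fun j => P (i%:Z, j)) (Sigma_row r w u i).
Proof.
move=> i_in; rewrite /row_card -size_filter; apply: size_undup_mem.
  exact/filter_uniq/Sigma_row_uniq.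
move=> j; rewrite mem_filter; apply/mapP/andP => [[[i' j']] | [Pij j_in]].
  by rewrite !mem_filter mem_Sigma /= => /andP[/eqP-> /andP[? /andP[_ ?]]] ->.
by exists (i%:Z, j); rewrite // !mem_filter mem_Sigma /= eqxx Pij j_in; lia.
Qed.

Lemma col_card_chi_star_Sigma_filter r w u (P : pred (int * int)) (j : nat) :
  col_card [seq chi_star r p | p <- [seq p <- Sigma r w u | P p]] j%:Z
  = count (fun i => (i%:Z, 1 - j%:Z) \in [seq p <- Sigma r w u | P p]) (iota 1 r).
Proof.
rewrite /col_card -size_filter -(size_map (fun i => r%:Z + 1 - i%:Z)); apply: size_undup_mem.
  by rewrite map_inj_uniq ?filter_uniq ?iota_uniq // => i i' /=; lia.
move=> a; apply/mapP/mapP => [[q] | [i]].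
  rewrite mem_filter => /andP[/eqP j_eq /mapP[p p_in q_eq]] ->; subst q.
  move: (p_in); rewrite mem_filter mem_Sigma => /andP[_ /andP[p1_in _]].
  exists `|p.1|%N; last by rewrite /chi_star /=; lia.
  rewrite mem_filter mem_iota; case: p p_in p1_in j_eq => i b /= ? ? j_eq.
  have -> : (1 - j%:Z) = b by move: j_eq; rewrite /chi_star /=; lia.
  by rewrite gez0_abs ?p_in //; lia.
rewrite mem_filter mem_iota => /andP[ij_in i_in] ->.
exists (chi_star r (i%:Z, 1 - j%:Z)) => //.
by rewrite mem_filter (map_f _ ij_in) /chi_star /= subKr eqxx.
Qed.

Section SkewDiagram.

Variables (r D : nat) (w : nat -> int) (u : nat -> nat).
Hypothesis u_part : partition_r r u.
Hypothesis chi_sub_w : diagram_sub r (chi r u) w.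
Hypothesis u1_le_D : (u 1 <= D)%N.

Local Notation c i := (u (r.+1 - i)%N).
Local Notation x := (a_shift w).
Local Notation y := (ut_shift r u).
Local Notation m := (n_above r D w u).

Lemma leq_part_utilde k l : (0 < l <= r)%N -> (k <= u l)%N = (l <= utilde r u k)%N.
Proof.
apply: downclosed_count_iota (fun l => k <= u l)%N r _ l => l' l'_in /= k_le.
by apply: leq_trans k_le _; apply: u_part; lia.
Qed.

Lemma utilde_le k : (utilde r u k <= r)%N.
Proof. by rewrite -[leqRHS](size_iota 1 r) count_size. Qed.

Lemma utilde_nonincr k k' : (k <= k')%N -> (utilde r u k' <= utilde r u k)%N.
Proof. by move=> le_kk'; apply: sub_count => l /=; apply: leq_trans. Qed.

Lemma part_le_first l : (0 < l <= r)%N -> (u l <= u 1)%N.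
Proof.
move=> l_in; apply: (nonincn_interval (T := nat) (a := 1) (b := r)); try lia.
by move=> i i_in; apply: u_part; lia.
Qed.

Lemma part_le_D i : (0 < i <= r)%N -> (c i <= D)%N.
Proof. by move=> i_in; apply: leq_trans (part_le_first _) u1_le_D; lia. Qed.

Lemma chi_le_w i : (0 < i <= r)%N -> - (c i)%:Z <= w i.
Proof. by move=> i_in; apply: chi_sub_w; lia. Qed.

Lemma ut_shift_lt_a_shift i k : (0 < i <= r)%N -> (c i < k)%N -> y k < x i.
Proof.
move=> i_in c_lt_k; have := chi_le_w i_in.
have : (utilde r u k < r.+1 - i)%N by rewrite ltnNge -leq_part_utilde -?ltnNge //; lia.
rewrite /a_shift /ut_shift; lia.
Qed.

Lemma a_shift_lt_ut_shift i k : (0 < i <= r)%N -> (0 < k <= c i)%N -> w i + k%:Z <= 0 ->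
  x i < y k.
Proof.
move=> i_in k_in; have : (r.+1 - i <= utilde r u k)%N by rewrite -leq_part_utilde; lia.
rewrite /a_shift /ut_shift; lia.
Qed.

Lemma lt_ut_shiftE i k : (0 < k <= D)%N -> (x i < y k) = (k <= m i)%N.
Proof.
apply: downclosed_count_iota => l _ /=; have := utilde_nonincr (leqnSn l).
rewrite /ut_shift; lia.
Qed.

Lemma n_above_le i : (0 < i <= r)%N -> (m i <= c i)%N.
Proof.
move=> i_in; case: (ltnP (c i) D) => [c_lt_D | D_le_c].
  rewrite leqNgt -(lt_ut_shiftE i (k := (c i).+1)); last lia.
  by rewrite lt_gtF // ut_shift_lt_a_shift.
by apply: leq_trans D_le_c; rewrite -[leqRHS](size_iota 1 D) count_size.
Qed.

Lemma n_above_ge i : (0 < i <= r)%N -> - w i <= (m i)%:Z.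
Proof.
move=> i_in; case: (lerP 0 (w i)) => [w_ge0 | w_lt0]; first lia.
have c_le_D := part_le_D i_in; have chi_le := chi_le_w i_in.
have : (absz (w i) <= m i)%N by rewrite -lt_ut_shiftE; [apply: a_shift_lt_ut_shift | ]; lia.
lia.
Qed.

Lemma Sigma_rowE i : (0 < i <= r)%N -> Sigma_row r w u i = int_range (- (c i)%:Z) (w i).
Proof. by move=> i_in; rewrite /Sigma_row ifT //; apply: chi_le_w. Qed.

Lemma in_Sigma_plusE i j : (0 < i <= r)%N -> - (c i)%:Z < j ->
  in_Sigma_plus r w u (i%:Z, j) = (- (m i)%:Z < j).
Proof.
move=> i_in c_lt_j; rewrite /in_Sigma_plus /=.
case: ifP => [j_ge1 | /negbT j_le0]; first by symmetry; apply/idP; lia.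
have := part_le_D i_in => c_le_D.
have -> : r%:Z + 1 - j = (r + absz (1 - j))%N%:Z by lia.
change ((x i < y (absz (1 - j))) = (- (m i)%:Z < j)).
by rewrite lt_ut_shiftE; [apply/idP/idP | ]; lia.
Qed.

Hypothesis shifts_sep : forall i k, (0 < i <= r)%N -> (0 < k <= D)%N -> x i != y k.

Lemma ut_shift_lt_a_shiftE i k : (0 < i <= r)%N -> (0 < k <= D)%N ->
  (y k < x i) = ~~ (x i < y k).
Proof. by move=> i_in k_in; rewrite -leNgt le_eqVlt eq_sym (negbTE (shifts_sep i_in k_in)). Qed.

Lemma in_Sigma_minusE i j : (0 < i <= r)%N -> - (c i)%:Z < j ->
  in_Sigma_minus r w u (i%:Z, j) = ~~ in_Sigma_plus r w u (i%:Z, j).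
Proof.
move=> i_in c_lt_j; rewrite /in_Sigma_minus /in_Sigma_plus /=.
case: ifP => // j_le0; have := part_le_D i_in => c_le_D.
have -> : r%:Z + 1 - j = (r + absz (1 - j))%N%:Z by lia.
by apply: ut_shift_lt_a_shiftE => //; lia.
Qed.

Lemma count_Sigma_plus_row i : (0 < i <= r)%N ->
  (count (fun j => in_Sigma_plus r w u (i%:Z, j)) (Sigma_row r w u i))%:Z = w i + (m i)%:Z.
Proof.
move=> i_in; have chi_le := chi_le_w i_in; have m_le := n_above_le i_in.
have m_ge := n_above_ge i_in; rewrite Sigma_rowE // (eq_in_count (a2 := fun j => - (m i)%:Z < j)) => [|j].
  by rewrite count_int_range_gt; lia.
by rewrite mem_int_range ?chi_le_w // => /andP[? _]; apply: in_Sigma_plusE.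
Qed.

Lemma count_Sigma_minus_row i : (0 < i <= r)%N ->
  count (fun j => in_Sigma_minus r w u (i%:Z, j)) (Sigma_row r w u i) = (c i - m i)%N.
Proof.
move=> i_in; have chi_le := chi_le_w i_in; have m_le := n_above_le i_in.
have m_ge := n_above_ge i_in; rewrite Sigma_rowE // (eq_in_count (a2 := fun j => j <= - (m i)%:Z)) => [|j].
  by rewrite count_int_range_le; lia.
rewrite mem_int_range ?chi_le_w // => /andP[? _].
by rewrite in_Sigma_minusE // in_Sigma_plusE // -leNgt.
Qed.

Lemma mem_Sigma_minus_col i j : (0 < i <= r)%N -> (0 < j <= D)%N ->
  ((i%:Z, 1 - j%:Z) \in Sigma_minus r w u) = (r.+1 - utilde r u j <= i)%N && (y j < x i).
Proof.
move=> i_in j_in; rewrite mem_filter mem_Sigma /= Sigma_rowE // mem_int_range ?chi_le_w //.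
rewrite /in_Sigma_minus ifF; last lia.
have -> : 1 - (1 - j%:Z) = j%:Z by rewrite subKr.
have -> : r%:Z + 1 - (1 - j%:Z) = (r + j)%N%:Z by lia.
have part_ut : (j <= c i)%N = (r.+1 - i <= utilde r u j)%N by apply: leq_part_utilde; lia.
have := utilde_le j; have := chi_le_w i_in; rewrite /a_shift /ut_shift /=.
by move=> ? ?; apply/idP/idP; move: part_ut; lia.
Qed.

Lemma count_Sigma_minus_col j : (0 < j <= D)%N ->
  (count (fun i => (i%:Z, 1 - j%:Z) \in Sigma_minus r w u) (iota 1 r))%:Z
  = (utilde r u j)%:Z - (count (fun i => x i < y j) (iota 1 r))%:Z.
Proof.
(* [A i] says j <= c_i: row i reaches column 1 - j. *)
move=> j_in; set A := leq (r.+1 - utilde r u j); set B := fun i => x i < y j.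
rewrite (eq_in_count (a2 := predI (predC B) A)) => [|i]; last first.
  rewrite mem_iota => i_in; rewrite mem_Sigma_minus_col; try lia.
  by rewrite andbC ut_shift_lt_a_shiftE //; lia.
have count_A : count A (iota 1 r) = utilde r u j.
  by rewrite count_geq_iota; have := utilde_le j; lia.
have count_BA : count (predI B A) (iota 1 r) = count B (iota 1 r).
  apply: eq_in_count => i; rewrite mem_iota => i_in /=.
  have [c_lt_j | j_le_c] := ltnP (c i) j.
    by rewrite /B lt_gtF ?ut_shift_lt_a_shift //; lia.
  have ut_ge : (r.+1 - i <= utilde r u j)%N by rewrite -leq_part_utilde //; lia.
  have A_i : A i by have := utilde_le j; rewrite /A /=; lia.
  by rewrite A_i andbT.
have := count_predC B (filter A (iota 1 r)).
by rewrite !count_filter size_filter count_A count_BA => <-; rewrite PoszD addrC addKr.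
Qed.

Lemma card_Sigma_minus :
  card_set (Sigma_minus r w u) = (\sum_(1 <= i < r.+1) (c i - m i))%N.
Proof.
rewrite /card_set undup_id ?filter_uniq ?Sigma_uniq // size_filter count_Sigma.
by apply: eq_big_nat => i i_in; apply: count_Sigma_minus_row.
Qed.

Lemma part_size_split :
  part_size r u = (\sum_(1 <= i < r.+1) (c i - m i) + \sum_(1 <= i < r.+1) m i)%N.
Proof.
rewrite -big_split big_nat_rev /=; apply: eq_big_nat => i i_in.
by rewrite subnK ?n_above_le //; [congr u | ]; lia.
Qed.

End SkewDiagram.

Lemma a_shift_wu_vec_le r w u k : (k <= r)%N -> a_shift (wu_vec r w u) k = a_shift w k.
Proof. by move=> k_le_r; rewrite /a_shift /wu_vec k_le_r. Qed.

Lemma a_shift_wu_vec_addn r w u k : (0 < k)%N ->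
  a_shift (wu_vec r w u) (r + k) = ut_shift r u k.
Proof. by move=> k_gt0; rewrite /a_shift /wu_vec ifF ?addKn //; lia. Qed.

Lemma a_shift_decr r w i j : gen_partition r w -> (0 < i < j)%N -> (j <= r)%N ->
  a_shift w j < a_shift w i.
Proof.
move=> w_part ij_in j_le_r; have : w j <= w i.
  apply: (nonincn_interval (a := 1) (b := r)); try lia.
  by move=> k k_in; apply: w_part; lia.
by rewrite /a_shift; lia.
Qed.

Lemma ut_shift_decr r u k k' : (k < k')%N -> ut_shift r u k' < ut_shift r u k.
Proof. by move=> lt_kk'; have := utilde_nonincr r u (ltnW lt_kk'); rewrite /ut_shift; lia. Qed.

Lemma admissible_sep r D w u : admissible (r + D) (wu_vec r w u) ->
  forall i k, (0 < i <= r)%N -> (0 < k <= D)%N -> a_shift w i != ut_shift r u k.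
Proof.
rewrite /admissible iotaD map_cat cat_uniq => /and3P[_ /hasPn disjoint _] i k i_in k_in.
have y_in : (r + k)%N \in iota (1 + r) D by rewrite mem_iota; lia.
rewrite -(@a_shift_wu_vec_le r w u) -?(@a_shift_wu_vec_addn r w u); try lia.
apply: contraNneq (disjoint _ (map_f _ y_in)) => <-.
by apply: map_f; rewrite mem_iota; lia.
Qed.

Lemma inv_index_sum d a : inv_index d a
  = (\sum_(1 <= p < d.+1) count (fun q => (p < q)%N && (a_shift a p < a_shift a q)%R) (iota 1 d))%N.
Proof.
rewrite /inv_index size_filter count_flatten sumnE !big_map /index_iota subn1.
by apply: eq_bigr => p _; rewrite count_map.
Qed.

Lemma inv_index_wu_vec r D w u : gen_partition r w ->
  inv_index (r + D) (wu_vec r w u) = (\sum_(1 <= i < r.+1) n_above r D w u i)%N.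
Proof.
move=> w_part; rewrite inv_index_sum (big_cat_nat (n := r.+1)) //=; last lia.
rewrite [X in (_ + X)%N]big1_seq ?addn0 => [|p]; last first.
  rewrite mem_index_iota => p_in; apply/eqP; rewrite -leqn0 leqNgt -has_count.
  apply/hasP => -[q]; rewrite mem_iota => q_in /andP[lt_pq].
  rewrite -(subnKC (_ : r <= p)%N) -1?(subnKC (_ : r <= q)%N) ?a_shift_wu_vec_addn; try lia.
  by rewrite lt_gtF // ut_shift_decr //; lia.
apply: eq_big_nat => p p_in; rewrite iotaD count_cat.
rewrite (@eq_in_count _ _ pred0) ?count_pred0 => [|q]; last first.
  rewrite mem_iota => q_in /=; rewrite !a_shift_wu_vec_le; try lia.
  by apply/negbTE; case: ltnP => //= lt_pq; rewrite lt_gtF // (a_shift_decr w_part) //; lia.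
rewrite add0n (addnC 1 r) iotaDl count_map; apply: eq_in_count => k; rewrite mem_iota => k_in /=.
by rewrite a_shift_wu_vec_le ?a_shift_wu_vec_addn; lia.
Qed.

Theorem lemma5p7 (d r : nat) (w : nat -> int) (u : nat -> nat) :
  (1 <= r)%N -> (r < d)%N ->
  gen_partition r w ->
  partition_r r u ->
  (u 1 <= d - r)%N ->
  diagram_sub r (chi r u) w ->
  admissible d (wu_vec r w u) ->
  [/\ (forall i : nat, (1 <= i <= r)%N ->
         s_plus d r w u i = (row_card (Sigma_plus r w u) i%:Z)%:Z),
      (forall j : nat, (1 <= j <= d - r)%N ->
         s_minus d r w u j
           = (col_card [seq chi_star r p | p <- Sigma_minus r w u] j%:Z)%:Z)
    & (inv_index d (wu_vec r w u))%:Z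
        = (part_size r u)%:Z - (card_set (Sigma_minus r w u))%:Z].
Proof.
move=> _ r_lt_d w_part u_part u1_le chi_sub adm.
have d_eq : d = (r + (d - r))%N by rewrite subnKC // ltnW.
rewrite d_eq in adm; have sep := admissible_sep adm.
split => [i i_in | j j_in |].
- by rewrite row_card_Sigma_filter // (count_Sigma_plus_row u_part chi_sub u1_le).
- by rewrite col_card_chi_star_Sigma_filter (count_Sigma_minus_col u_part chi_sub u1_le sep).
rewrite {1}d_eq inv_index_wu_vec // (card_Sigma_minus u_part chi_sub u1_le sep).
by rewrite (part_size_split u_part chi_sub u1_le); lia.
Qed.
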